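(* For every integer $s$, $$\sum_{k=1}^\infty\frac{L_{2k+s}}{4^k(2k-1)(2k)(2k+1)}=-L_s\ln 2+\frac5{16}L_{s+1}\ln 5+\frac{\sqrt5}{8}(15F_{s-1}-F_s)\ln\alpha-\frac{L_s}{2},$$ $$\sum_{k=1}^\infty\frac{F_{2k+s}}{4^k(2k-1)(2k)(2k+1)}=-F_s\ln 2+\frac5{16}F_{s+1}\ln 5+\frac{1}{8\sqrt5}(15L_{s-1}-L_s)\ln\alpha-\frac{F_s}{2}.$$
   Context: $F_n$ and $L_n$ are the Fibonacci and Lucas numbers for $n\in\mathbb Z$: $F_n=(\alpha^n-\beta^n)/(\alpha-\beta)$, $L_n=\alpha^n+\beta^n$, where $\alpha=(1+\sqrt5)/2$, $\beta=(1-\sqrt5)/2$. *)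

From Stdlib Require Import Reals.
From Coquelicot Require Import Coquelicot.
Open Scope R_scope.

Definition alpha : R := (1 + sqrt 5) / 2.
Definition beta : R := (1 - sqrt 5) / 2.

Definition Fib (n : Z) : R := (powerRZ alpha n - powerRZ beta n) / (alpha - beta).
Definition Luc (n : Z) : R := powerRZ alpha n + powerRZ beta n.

Definition den (k : nat) : R :=
  4 ^ k * ((2 * INR k - 1) * (2 * INR k) * (2 * INR k + 1)).

(* Partial fractions, 1/((2k-1)(2k)(2k+1)) = (1/(2k-1) - 2/(2k) + 1/(2k+1))/2, split
   sum_{k>=1} x^(2k)/((2k-1)(2k)(2k+1)) into the odd and even parts of the logarithmic
   series sum_m x^m/m = -ln(1-x), which gives, for 0 < |x| < 1, the value
   ((x + 1/x) artanh x + ln(1-x^2) - 1)/2.  By Binet's formulas L_(2k+s)/4^k and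
   F_(2k+s)/4^k are combinations of alpha^s (alpha/2)^(2k) and beta^s (beta/2)^(2k), and
   at x = alpha/2, beta/2 every logarithm reduces to ln 2, ln 5 and ln alpha because
   1 - alpha/2 = 1/(2 alpha^2), 1 + alpha/2 = sqrt 5 alpha/2, 1 - beta/2 = alpha^2/2 and
   1 + beta/2 = sqrt 5/(2 alpha). *)

From Stdlib Require Import Reals Lra Lia Nsatz.
From Coquelicot Require Import Coquelicot.
Open Scope R_scope.

Fixpoint log_sum (n : nat) (x : R) : R :=
  match n with
  | O => 0
  | S m => log_sum m x + x ^ S m / INR (S m)
  end.

Lemma log_sum_0 n : log_sum n 0 = 0.
Proof. induction n as [|m IH]; simpl; [reflexivity |]. rewrite IH. unfold Rdiv. ring. Qed.

Lemma derivable_pt_lim_log_sum n x :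
  x <> 1 -> derivable_pt_lim (log_sum n) x ((1 - x ^ n) / (1 - x)).
Proof.
  intros Hx. assert (Hx' : 1 - x <> 0) by lra.
  induction n as [|m IH]; simpl log_sum.
  - replace ((1 - x ^ 0) / (1 - x)) with 0 by (simpl; field; exact Hx').
    apply derivable_pt_lim_const.
  - replace ((1 - x ^ S m) / (1 - x))
      with ((1 - x ^ m) / (1 - x) + INR (S m) * x ^ pred (S m) * / INR (S m))
      by (simpl pred; simpl pow; field; split; [exact Hx' | apply not_0_INR; lia]).
    apply (derivable_pt_lim_plus (log_sum m) (fun u => u ^ S m / INR (S m))); [exact IH |].
    apply (derivable_pt_lim_scal_right (fun u => u ^ S m)), derivable_pt_lim_pow.
Qed.

Lemma derivable_pt_lim_log_remainder n x :
  x < 1 -> derivable_pt_lim (fun u => log_sum n u + ln (1 - u)) x (- x ^ n / (1 - x)).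
Proof.
  intros Hx.
  replace (- x ^ n / (1 - x)) with ((1 - x ^ n) / (1 - x) + / (1 - x) * (0 - 1))
    by (field; lra).
  apply (derivable_pt_lim_plus (log_sum n) (fun u => ln (1 - u))).
  - apply derivable_pt_lim_log_sum. lra.
  - apply (derivable_pt_lim_comp (fun u => 1 - u) ln).
    + apply (derivable_pt_lim_minus (fun _ => 1) id).
      * apply derivable_pt_lim_const.
      * apply derivable_pt_lim_id.
    + apply derivable_pt_lim_ln. lra.
Qed.

Lemma log_remainder_bound n x : Rabs x < 1 ->
  Rabs (log_sum n x + ln (1 - x)) <= Rabs x ^ n * (Rabs x / (1 - Rabs x)).
Proof.
  intros Hx. pose proof (Rabs_pos x) as Hx0.
  destruct (MVT_abs (fun u => log_sum n u + ln (1 - u)) (fun u => - u ^ n / (1 - u)) 0 x)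
    as [c [Hmvt Hc]].
  { intros c Hc. apply derivable_pt_lim_log_remainder.
    apply Rabs_def2 in Hx. unfold Rmin, Rmax in Hc. destruct (Rle_dec 0 x); lra. }
  assert (Hcx : Rabs c <= Rabs x).
  { unfold Rmin, Rmax in Hc. unfold Rabs.
    destruct (Rle_dec 0 x), (Rcase_abs c), (Rcase_abs x); lra. }
  rewrite log_sum_0, !Rminus_0_r, ln_1, Rplus_0_r, Rminus_0_r in Hmvt. rewrite Hmvt.
  assert (Hcpow : Rabs c ^ n <= Rabs x ^ n) by (apply pow_incr; split; [apply Rabs_pos | exact Hcx]).
  assert (H1c : 1 - Rabs x <= Rabs (1 - c)).
  { pose proof (Rabs_triang_inv 1 c) as Htri. rewrite Rabs_R1 in Htri. lra. }
  unfold Rdiv. rewrite Rabs_mult, Rabs_Ropp, Rabs_inv, <- RPow_abs, Rmult_assoc.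
  apply Rmult_le_compat; [apply pow_le, Rabs_pos | | exact Hcpow |].
  - apply Rmult_le_pos; [apply Rlt_le, Rinv_0_lt_compat | apply Rabs_pos]; lra.
  - rewrite Rmult_comm. apply Rmult_le_compat_l; [exact Hx0 |].
    apply Rinv_le_contravar; lra.
Qed.

Lemma is_lim_seq_log_sum x : Rabs x < 1 -> is_lim_seq (fun n => log_sum n x) (- ln (1 - x)).
Proof.
  intros Hx.
  assert (Hrem : is_lim_seq (fun n => log_sum n x + ln (1 - x)) 0).
  { apply is_lim_seq_abs_0.
    apply is_lim_seq_le_le with (fun _ => 0) (fun n => Rabs x ^ n * (Rabs x / (1 - Rabs x))).
    - intros n. split; [apply Rabs_pos | apply log_remainder_bound, Hx].
    - apply is_lim_seq_const.
    - replace (Finite 0) with (Rbar_mult 0 (Rabs x / (1 - Rabs x))) by (simpl; f_equal; ring).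
      apply is_lim_seq_scal_r, is_lim_seq_geom. rewrite Rabs_Rabsolu. exact Hx. }
  replace (- ln (1 - x)) with (0 - ln (1 - x)) by ring.
  apply is_lim_seq_ext with (fun n => (log_sum n x + ln (1 - x)) - ln (1 - x)).
  - intros n. ring.
  - apply is_lim_seq_minus'; [exact Hrem | apply is_lim_seq_const].
Qed.

Definition triple_den (k : nat) : R := (2 * INR k - 1) * (2 * INR k) * (2 * INR k + 1).

Lemma triple_den_succ_pos k : 0 < triple_den (S k).
Proof.
  unfold triple_den. rewrite S_INR. pose proof (pos_INR k).
  repeat apply Rmult_lt_0_compat; lra.
Qed.

(* Coquelicot states [sum_n] and [is_series_ext] equalities in the carrier of a normed
   module; [change (?u = ?v) with (@eq R u v)] exposes them to [ring] and [field]. *)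
Lemma sum_n_triple_log_sum x N : x <> 0 ->
  sum_n (fun n => x ^ (2 * S n) / triple_den (S n)) N =
  (x * (log_sum (2 * S N) x - log_sum (2 * S N) (- x)) / 2
   - (log_sum (2 * S N) x + log_sum (2 * S N) (- x))
   + (log_sum (S (2 * S N)) x - log_sum (S (2 * S N)) (- x)) / (2 * x) - 1) / 2.
Proof.
  intros Hx. induction N as [|N IH]; change (?u = ?v) with (@eq R u v).
  - rewrite sum_O. unfold triple_den. simpl. field. exact Hx.
  - rewrite sum_Sn, IH. change (plus ?a ?b) with (a + b).
    replace (2 * S (S N))%nat with (S (S (2 * S N))) by lia.
    assert (Hm : INR (2 * S N) = 2 * INR N + 2) by (rewrite mult_INR, (S_INR N); simpl (INR 2); ring).
    set (m := (2 * S N)%nat) in *.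
    assert (Heven : (- x) ^ m = x ^ m) by (unfold m; rewrite !pow_mult; f_equal; ring).
    cbn [log_sum pow]. rewrite Heven. unfold triple_den. rewrite !S_INR, Hm.
    pose proof (pos_INR N).
    field. repeat split; lra.
Qed.

Definition triple_sum (x : R) : R :=
  ((x + / x) * (ln (1 + x) - ln (1 - x)) / 2 + ln (1 - x) + ln (1 + x) - 1) / 2.

Lemma is_series_triple x : x <> 0 -> Rabs x < 1 ->
  is_series (fun n => x ^ (2 * S n) / triple_den (S n)) (triple_sum x).
Proof.
  intros Hx0 Hx.
  assert (Hsub : forall (phi : nat -> nat) y, (forall n, phi n < phi (S n))%nat -> Rabs y < 1 ->
                 is_lim_seq (fun N => log_sum (phi N) y) (- ln (1 - y))).
  { intros phi y Hphi Hy. apply (is_lim_seq_subseq (fun n => log_sum n y)).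
    - apply eventually_subseq, Hphi.
    - apply is_lim_seq_log_sum, Hy. }
  assert (Hxm : Rabs (- x) < 1) by (rewrite Rabs_Ropp; exact Hx).
  change (is_lim_seq (sum_n (fun n => x ^ (2 * S n) / triple_den (S n))) (triple_sum x)).
  apply (is_lim_seq_ext _ _ _ (fun N => eq_sym (sum_n_triple_log_sum x N Hx0))).
  replace (triple_sum x) with
    ((x * (- ln (1 - x) - - ln (1 - - x)) / 2 - (- ln (1 - x) + - ln (1 - - x))
      + (- ln (1 - x) - - ln (1 - - x)) / (2 * x) - 1) / 2)
    by (unfold triple_sum; replace (1 - - x) with (1 + x) by ring; field; exact Hx0).
  unfold Rdiv.
  repeat first [ apply is_lim_seq_minus' | apply is_lim_seq_plus' | apply is_lim_seq_mult'
               | apply is_lim_seq_const | (apply Hsub; [intros; lia | assumption]) ].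
Qed.

Lemma powerRZ_even_shift (a : R) (k : nat) (s : Z) : a <> 0 ->
  powerRZ a (2 * Z.of_nat k + s) = a ^ (2 * k) * powerRZ a s.
Proof.
  intros Ha. rewrite powerRZ_add, pow_powerRZ by exact Ha. do 2 f_equal. lia.
Qed.

Lemma pow_half_even (a : R) (k : nat) : (a / 2) ^ (2 * k) = a ^ (2 * k) / 4 ^ k.
Proof.
  unfold Rdiv. rewrite Rpow_mult_distr, <- pow_inv, (pow_mult (/ 2)). do 2 f_equal. field.
Qed.

Lemma is_series_powerRZ_den (a : R) (s : Z) : a <> 0 -> Rabs a < 2 ->
  is_series (fun n => powerRZ a (2 * Z.of_nat (S n) + s) / den (S n))
    (triple_sum (a / 2) * powerRZ a s).
Proof.
  intros Ha0 Ha.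
  apply (is_series_ext (fun n => (a / 2) ^ (2 * S n) / triple_den (S n) * powerRZ a s)).
  - intros n. change (?u = ?v) with (@eq R u v).
    rewrite powerRZ_even_shift by exact Ha0.
    unfold den. fold (triple_den (S n)). rewrite pow_half_even.
    pose proof (triple_den_succ_pos n). pose proof (pow_lt 4 (S n)).
    field. lra.
  - apply is_series_scal_r, is_series_triple.
    + lra.
    + rewrite Rabs_div, (Rabs_pos_eq 2); lra.
Qed.

Lemma sqrt5_sq : sqrt 5 * sqrt 5 = 5.
Proof. apply sqrt_sqrt. lra. Qed.

Lemma sqrt5_bounds : 2 < sqrt 5 < 3.
Proof. pose proof sqrt5_sq. pose proof (sqrt_pos 5). split; nra. Qed.

Lemma alpha_bounds : 1 < alpha < 2.
Proof. unfold alpha. pose proof sqrt5_bounds. lra. Qed.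

Lemma beta_bounds : -1 < beta < 0.
Proof. unfold beta. pose proof sqrt5_bounds. lra. Qed.

Lemma alpha_sub_beta : alpha - beta = sqrt 5.
Proof. unfold alpha, beta. field. Qed.

Ltac golden_field := unfold alpha, beta; pose proof sqrt5_sq;
  field_simplify_eq; [cbn [pow]; nsatz | pose proof sqrt5_bounds; lra ..].

Ltac golden_pos :=
  first [ lra | apply Rmult_lt_0_compat; golden_pos | apply Rinv_0_lt_compat; golden_pos
        | apply pow_lt; golden_pos ].

Lemma one_sub_half_alpha : 1 - alpha / 2 = / (2 * alpha ^ 2).
Proof. golden_field. Qed.

Lemma one_add_half_alpha : 1 + alpha / 2 = sqrt 5 * alpha / 2.
Proof. golden_field. Qed.

Lemma one_sub_half_beta : 1 - beta / 2 = alpha ^ 2 / 2.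
Proof. golden_field. Qed.

Lemma one_add_half_beta : 1 + beta / 2 = sqrt 5 / (2 * alpha).
Proof. golden_field. Qed.

Lemma ln_sqrt x : 0 < x -> ln (sqrt x) = ln x / 2.
Proof.
  intros Hx. pose proof (sqrt_lt_R0 x Hx).
  rewrite <- (sqrt_sqrt x) at 2 by lra. rewrite ln_mult by lra. field.
Qed.

Lemma ln_one_sub_half_alpha : ln (1 - alpha / 2) = - ln 2 - 2 * ln alpha.
Proof.
  pose proof alpha_bounds.
  rewrite one_sub_half_alpha, ln_Rinv, ln_mult, ln_pow by golden_pos. simpl INR. ring.
Qed.

Lemma ln_one_add_half_alpha : ln (1 + alpha / 2) = ln 5 / 2 + ln alpha - ln 2.
Proof.
  pose proof alpha_bounds. pose proof sqrt5_bounds.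
  rewrite one_add_half_alpha. unfold Rdiv at 1.
  rewrite !ln_mult, ln_Rinv, ln_sqrt by golden_pos. ring.
Qed.

Lemma ln_one_sub_half_beta : ln (1 - beta / 2) = 2 * ln alpha - ln 2.
Proof.
  pose proof alpha_bounds.
  rewrite one_sub_half_beta. unfold Rdiv.
  rewrite ln_mult, ln_Rinv, ln_pow by golden_pos. simpl INR. ring.
Qed.

Lemma ln_one_add_half_beta : ln (1 + beta / 2) = ln 5 / 2 - ln alpha - ln 2.
Proof.
  pose proof alpha_bounds. pose proof sqrt5_bounds.
  rewrite one_add_half_beta. unfold Rdiv at 1.
  rewrite ln_mult, ln_Rinv, ln_mult, ln_sqrt by golden_pos. ring.
Qed.

Lemma triple_sum_half_alpha :
  triple_sum (alpha / 2)
  = - ln 2 + 5 / 16 * alpha * ln 5 + (15 / alpha - 1) / 8 * ln alpha - 1 / 2.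
Proof.
  unfold triple_sum. rewrite ln_one_sub_half_alpha, ln_one_add_half_alpha.
  (* [ln alpha] must stay an atom for [nsatz] when [golden_field] unfolds [alpha]. *)
  set (l := ln alpha). golden_field.
Qed.

Lemma triple_sum_half_beta :
  triple_sum (beta / 2)
  = - ln 2 + 5 / 16 * beta * ln 5 - (15 / beta - 1) / 8 * ln alpha - 1 / 2.
Proof.
  unfold triple_sum. rewrite ln_one_sub_half_beta, ln_one_add_half_beta.
  set (l := ln alpha). golden_field.
Qed.

Lemma is_series_Luc_den (s : Z) :
  is_series (fun n => Luc (2 * Z.of_nat (S n) + s) / den (S n))
    (triple_sum (alpha / 2) * powerRZ alpha s + triple_sum (beta / 2) * powerRZ beta s).
Proof.
  pose proof alpha_bounds. pose proof beta_bounds.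
  assert (Ha := is_series_powerRZ_den alpha s ltac:(lra) ltac:(apply Rabs_def1; lra)).
  assert (Hb := is_series_powerRZ_den beta s ltac:(lra) ltac:(apply Rabs_def1; lra)).
  eapply is_series_ext; [| exact (is_series_plus _ _ _ _ Ha Hb)].
  intros n. change (?u = ?v) with (@eq R u v). change plus with Rplus.
  unfold Luc, Rdiv. ring.
Qed.

Lemma is_series_Fib_den (s : Z) :
  is_series (fun n => Fib (2 * Z.of_nat (S n) + s) / den (S n))
    ((triple_sum (alpha / 2) * powerRZ alpha s - triple_sum (beta / 2) * powerRZ beta s)
     / (alpha - beta)).
Proof.
  pose proof alpha_bounds. pose proof beta_bounds.
  assert (Ha := is_series_powerRZ_den alpha s ltac:(lra) ltac:(apply Rabs_def1; lra)).
  assert (Hb := is_series_powerRZ_den beta s ltac:(lra) ltac:(apply Rabs_def1; lra)).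
  eapply is_series_ext;
    [| exact (is_series_scal_r (/ (alpha - beta)) _ _ (is_series_minus _ _ _ _ Ha Hb))].
  intros n. change (?u = ?v) with (@eq R u v). change plus with Rplus. change opp with Ropp.
  unfold Fib, Rdiv. ring.
Qed.

Lemma powerRZ_add_1 (x : R) (s : Z) : x <> 0 -> powerRZ x (s + 1) = powerRZ x s * x.
Proof. intros Hx. rewrite powerRZ_add by exact Hx. simpl. ring. Qed.

Lemma powerRZ_sub_1 (x : R) (s : Z) : x <> 0 -> powerRZ x (s - 1) = powerRZ x s / x.
Proof. intros Hx. unfold Z.sub. rewrite powerRZ_add by exact Hx. simpl. field. exact Hx. Qed.

Theorem theorem13 : forall s : Z,
  is_series (fun n : nat => Luc (2 * Z.of_nat (S n) + s) / den (S n))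
    (- Luc s * ln 2 + 5 / 16 * Luc (s + 1) * ln 5
     + sqrt 5 / 8 * (15 * Fib (s - 1) - Fib s) * ln alpha - Luc s / 2)
  /\
  is_series (fun n : nat => Fib (2 * Z.of_nat (S n) + s) / den (S n))
    (- Fib s * ln 2 + 5 / 16 * Fib (s + 1) * ln 5
     + 1 / (8 * sqrt 5) * (15 * Luc (s - 1) - Luc s) * ln alpha - Fib s / 2).
Proof.
  intros s. pose proof alpha_bounds. pose proof beta_bounds.
  split; [apply (eq_ind _ (is_series _) (is_series_Luc_den s))
         | apply (eq_ind _ (is_series _) (is_series_Fib_den s))];
    change (?u = ?v) with (@eq R u v);
    rewrite triple_sum_half_alpha, triple_sum_half_beta; unfold Luc, Fib;
    rewrite <- alpha_sub_beta, !powerRZ_add_1, !powerRZ_sub_1 by lra;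
    field; repeat split; lra.
Qed.
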